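(* Let $2\le m\le n$. Then $\mathcal{P}(\mathrm{K}_{m,n})=\mathcal{AM}(\mathrm{K}_{m,n})$.
   Context: $\mathrm{K}_{m,n}$ is the poset $\{x_1,\dots,x_m,y_1,\dots,y_n\}$ with $x_i<y_j$ for all $i,j$ and no other relations between distinct elements. For a finite connected poset $X$ and $x<y$, $e_{xy}$ denotes the incidence-algebra basis element, and $B=\{e_{xy}:x<y\}$. $\mathcal{C}(X)$ is the set of maximal chains. For a bijection $\theta:B\to B$ and $C:u_1<\dots<u_k$ in $\mathcal{C}(X)$, $\theta$ is increasing on $C$ if there is $D:v_1<\dots<v_k$ in $\mathcal{C}(X)$ with $\theta(e_{u_iu_j})=e_{v_iv_j}$ for all $i<j$, decreasing if $\theta(e_{u_iu_j})=e_{v_{k-j+1}v_{k-i+1}}$ for all $i<j$. $\mathcal{M}(X)$: bijections $B\to B$ increasing or decreasing on every maximal chain. A walk is a sequence $u_0,\dots,u_r$ where for each $i$ one of $u_i,u_{i+1}$ covers the other; closed if $u_0=u_r$. For a closed walk $\Gamma:u_0,\dots,u_r=u_0$ and $z\in X$: $s^+_{\theta,\Gamma}(z)=|\{i: u_i<u_{i+1},\ \exists w>z,\ \theta(e_{zw})=e_{u_iu_{i+1}}\}|$, $s^-_{\theta,\Gamma}(z)=|\{i: u_i>u_{i+1},\ \exists w>z,\ \theta(e_{zw})=e_{u_{i+1}u_i}\}|$, $t^+_{\theta,\Gamma}(z)=|\{i: u_i<u_{i+1},\ \exists w<z,\ \theta(e_{wz})=e_{u_iu_{i+1}}\}|$,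 $t^-_{\theta,\Gamma}(z)=|\{i: u_i>u_{i+1},\ \exists w<z,\ \theta(e_{wz})=e_{u_{i+1}u_i}\}|$, $0\le i\le r-1$. $\theta$ is admissible if $s^+-s^-=t^+-t^-$ at every $z$ for every closed walk; $\mathcal{AM}(X)$ is the set of admissible elements of $\mathcal{M}(X)$. $\theta:B\to B$ is proper if there is an automorphism $\lambda$ of $X$ with $\theta(e_{xy})=e_{\lambda(x)\lambda(y)}$ for all $x<y$, or an anti-automorphism $\lambda$ with $\theta(e_{xy})=e_{\lambda(y)\lambda(x)}$ for all $x<y$; $\mathcal{P}(X)$ is the set of proper bijections. *)

From mathcomp Require Import all_boot all_order all_algebra.
Set Implicit Arguments. Unset Strict Implicit. Unset Printing Implicit Defensive.

(* A finite poset is given by a finite carrier T and its strict order lt. *)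
Section Poset.
Variables (T : finType) (lt : rel T).

Definition covers (x y : T) : bool := lt x y && ~~ [exists z, lt x z && lt z y].

(* B = { e_xy : x < y }, encoded as the pairs (x,y) with x < y *)
Definition Bset := {p : (T * T)%type | lt p.1 p.2}.

Definition is_chain (s : seq T) : bool := sorted lt s.
Definition max_chain (s : seq T) : Prop :=
  is_chain s /\ forall t, is_chain t -> {subset s <= t} -> {subset t <= s}.

Definition increasing_on (theta : Bset -> Bset) (C : seq T) : Prop :=
  exists D : seq T, max_chain D /\ size D = size C /\
    forall (x0 : T) (i j : nat), i < j -> j < size C ->
      forall b : Bset, val b = (nth x0 C i, nth x0 C j) ->
        val (theta b) = (nth x0 D i, nth x0 D j).

(* theta is decreasing on C; 0-indexed: e_{u_i u_j} |-> e_{v_(k-1-j) v_(k-1-i)} *)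
Definition decreasing_on (theta : Bset -> Bset) (C : seq T) : Prop :=
  exists D : seq T, max_chain D /\ size D = size C /\
    forall (x0 : T) (i j : nat), i < j -> j < size C ->
      forall b : Bset, val b = (nth x0 C i, nth x0 C j) ->
        val (theta b) = (nth x0 D (size C - 1 - j), nth x0 D (size C - 1 - i)).

Definition inM (theta : Bset -> Bset) : Prop :=
  bijective theta /\
  forall C, max_chain C -> increasing_on theta C \/ decreasing_on theta C.

Definition adjacent (x y : T) : bool := covers x y || covers y x.
Definition closed_walk (u0 : T) (s : seq T) : Prop :=
  path adjacent u0 s /\ last u0 s = u0.

(* the walk Gamma : u_0, ..., u_r with u_(i+1) = nth u0 s i, r = size s *)
Definition s_plus (theta : Bset -> Bset) (u0 : T) (s : seq T) (z : T) : nat :=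
  \sum_(i < size s)
    [&& lt (nth u0 (u0 :: s) i) (nth u0 (u0 :: s) i.+1) &
        [exists b : Bset, ((val b).1 == z) &&
           (val (theta b) == (nth u0 (u0 :: s) i, nth u0 (u0 :: s) i.+1))]].
Definition s_minus (theta : Bset -> Bset) (u0 : T) (s : seq T) (z : T) : nat :=
  \sum_(i < size s)
    [&& lt (nth u0 (u0 :: s) i.+1) (nth u0 (u0 :: s) i) &
        [exists b : Bset, ((val b).1 == z) &&
           (val (theta b) == (nth u0 (u0 :: s) i.+1, nth u0 (u0 :: s) i))]].
Definition t_plus (theta : Bset -> Bset) (u0 : T) (s : seq T) (z : T) : nat :=
  \sum_(i < size s)
    [&& lt (nth u0 (u0 :: s) i) (nth u0 (u0 :: s) i.+1) &
        [exists b : Bset, ((val b).2 == z) &&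
           (val (theta b) == (nth u0 (u0 :: s) i, nth u0 (u0 :: s) i.+1))]].
Definition t_minus (theta : Bset -> Bset) (u0 : T) (s : seq T) (z : T) : nat :=
  \sum_(i < size s)
    [&& lt (nth u0 (u0 :: s) i.+1) (nth u0 (u0 :: s) i) &
        [exists b : Bset, ((val b).2 == z) &&
           (val (theta b) == (nth u0 (u0 :: s) i.+1, nth u0 (u0 :: s) i))]].

Definition admissible (theta : Bset -> Bset) : Prop :=
  forall (u0 : T) (s : seq T), closed_walk u0 s -> forall z : T,
    ((s_plus theta u0 s z)%:Z - (s_minus theta u0 s z)%:Z =
     (t_plus theta u0 s z)%:Z - (t_minus theta u0 s z)%:Z)%R.

Definition inAM (theta : Bset -> Bset) : Prop := inM theta /\ admissible theta.

Definition automorphism (f : T -> T) : Prop :=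
  bijective f /\ forall x y, lt (f x) (f y) = lt x y.
Definition anti_automorphism (f : T -> T) : Prop :=
  bijective f /\ forall x y, lt (f y) (f x) = lt x y.

Definition is_proper (theta : Bset -> Bset) : Prop :=
  (exists f, automorphism f /\
     forall b : Bset, val (theta b) = (f (val b).1, f (val b).2)) \/
  (exists f, anti_automorphism f /\
     forall b : Bset, val (theta b) = (f (val b).2, f (val b).1)).

End Poset.

(* K_{m,n}: elements inl i = x_i, inr j = y_j, with x_i < y_j *)
Definition Kmn_T (m n : nat) : finType := ('I_m + 'I_n)%type.
Definition Kmn_lt (m n : nat) : rel (Kmn_T m n) :=
  fun a b => match a, b with inl _, inr _ => true | _, _ => false end.
Arguments Kmn_lt : clear implicits.

From mathcomp Require Import all_boot all_order all_algebra zify.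
Set Implicit Arguments. Unset Strict Implicit. Unset Printing Implicit Defensive.

(* On K_{m,n} every maximal chain is a single covering pair x_i < y_j, on which any
   bijection of B is increasing, so M(K_{m,n}) is the set of all bijections of B.  A proper
   bijection is admissible on any poset: along a closed walk, s^+ + t^- and s^- + t^+ count
   the visits of the walk to one fixed vertex (the image of z) just before and just after a
   step, and these counts agree on a closed walk.
   Conversely, write theta^-1 (e_{x_i y_j}) = e_{x_p(i,j) y_q(i,j)}.  Admissibility along the
   4-cycles x_a, y_c, x_b, y_d, x_a says that {p(a,c), p(b,d)} = {p(b,c), p(a,d)} as
   multisets, and likewise for q.  This rectangle rule forces p and q each to depend on a
   single coordinate, and injectivity (with m, n >= 2) leaves the two cases p(i), q(j)
   (an automorphism) and p(j), q(i) (an anti-automorphism). *)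

Lemma eqz_sub_nat (x y u v : nat) :
  (x%:Z - y%:Z = u%:Z - v%:Z)%R <-> x + v = u + y.
Proof. lia. Qed.

Lemma perm_eq_pair (X : eqType) (x1 x2 y1 y2 : X) :
  perm_eq [:: x1; x2] [:: y1; y2] -> (x1 = y1 /\ x2 = y2) \/ (x1 = y2 /\ x2 = y1).
Proof.
move=> pxy; have := mem_head x1 [:: x2]; rewrite (perm_mem pxy) !inE.
case/orP=> /eqP x1E; subst x1.
- by rewrite perm_cons in pxy; left; have [->] := @perm_small_eq _ _ [:: _] isT pxy.
- have pyy : perm_eq [:: y1; y2] [:: y2; y1] by rewrite (perm_catC [:: y1]).
  by rewrite (permPr pyy) perm_cons in pxy; right; have [->] := @perm_small_eq _ _ [:: _] isT pxy.
Qed.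

Lemma constant_rows_or_columns (I J : finType) (X : eqType) (F : I -> J -> X) :
  (forall a b c d, perm_eq [:: F a c; F b d] [:: F b c; F a d]) ->
  (forall i j j', F i j = F i j') \/ (forall i i' j, F i j = F i' j).
Proof.
move=> rectF; have {}rectF a b c d := perm_eq_pair (rectF a b c d).
have [colF|] := boolP [forall a, forall b, forall c, F a c == F b c].
  by right=> i i' j; apply/eqP; move/forallP/(_ i)/forallP/(_ i')/forallP/(_ j): colF.
move=> /forallPn [a /forallPn [b /forallPn [c /eqP Fab]]].
have rowF e d : F e d = F e c.
  have [Fea|Fea] := eqVneq (F e c) (F a c).
    by case: (rectF b e c d) => [[/esym Fbe _]|[_ ->]] //; case: Fab; rewrite -Fea Fbe.
  by case: (rectF a e c d) => [[/esym Fae _]|[_ ->]] //; rewrite Fae eqxx in Fea.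
by left=> i j j'; rewrite !rowF.
Qed.

Lemma closed_walk_sum_shift (T : Type) (u0 : T) (s : seq T) (F : T -> nat) :
  last u0 s = u0 ->
  \sum_(i < size s) F (nth u0 (u0 :: s) i) =
  \sum_(i < size s) F (nth u0 (u0 :: s) i.+1).
Proof.
case: s => [|a s] lastE; first by rewrite !big_ord0.
rewrite big_ord_recl big_ord_recr addnC; congr (_ + F _).
by rewrite /= -(last_nth u0) -lastE.
Qed.

Section Poset.
Variables (T : finType) (lt : rel T).
Implicit Types (theta g : Bset lt -> Bset lt).

Lemma proper_bijective theta : is_proper theta -> bijective theta.
Proof.
move=> thetaP; apply: injF_bij => b1 b2 /(congr1 val).
case: thetaP => -[f [[[h fK _] _] thetaE]];
  rewrite !thetaE => -[/(can_inj fK) e1 /(can_inj fK) e2];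
  by apply: val_inj; rewrite [val b1]surjective_pairing [val b2]surjective_pairing e1 e2.
Qed.

Lemma proper_inv theta g : cancel theta g -> cancel g theta -> is_proper g -> is_proper theta.
Proof.
move=> thetaK gK [] [f [[[h fK hK] ltf] gE]]; [left | right]; exists h;
  (split; first by split=> [|x y]; [exists f | rewrite -ltf !hK]);
  by move=> b; rewrite -[in RHS](thetaK b) gE /= !fK -surjective_pairing.
Qed.

Lemma exists_preimage theta g (P : pred (Bset lt)) (e : Bset lt) :
  cancel theta g -> cancel g theta ->
  [exists b, P b && (val (theta b) == val e)] = P (g e).
Proof.
move=> thetaK gK; apply/existsP/idP => [[b /andP [Pb /eqP /val_inj <-]]|Pge].
  by rewrite thetaK.
by exists (g e); rewrite Pge gK eqxx.
Qed.

Hypothesis lt_asym : forall x y, lt x y -> ~~ lt y x.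

(* A step u -> u' contributes [w u u'] to s^+ + t^- and [w u' u] to s^- + t^+. *)
Lemma walk_balance theta u0 s z (w : T -> T -> bool) :
  path (adjacent lt) u0 s ->
  (forall x y, lt x y ->
     [exists b : Bset lt, ((val b).1 == z) && (val (theta b) == (x, y))] = w x y /\
     [exists b : Bset lt, ((val b).2 == z) && (val (theta b) == (x, y))] = w y x) ->
  \sum_(i < size s) w (nth u0 (u0 :: s) i) (nth u0 (u0 :: s) i.+1) =
  \sum_(i < size s) w (nth u0 (u0 :: s) i.+1) (nth u0 (u0 :: s) i) ->
  ((s_plus theta u0 s z)%:Z - (s_minus theta u0 s z)%:Z =
   (t_plus theta u0 s z)%:Z - (t_minus theta u0 s z)%:Z)%R.
Proof.
move=> /(pathP u0) adj wE sumE; apply/eqz_sub_nat.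
rewrite /s_plus /t_minus /s_minus /t_plus -!big_split /=.
have step (i : 'I_(size s)) :
    let u := nth u0 (u0 :: s) i in let u' := nth u0 (u0 :: s) i.+1 in
    [&& lt u u' & [exists b : Bset lt, ((val b).1 == z) && (val (theta b) == (u, u'))]] +
    [&& lt u' u & [exists b : Bset lt, ((val b).2 == z) && (val (theta b) == (u', u))]] = w u u' /\
    [&& lt u u' & [exists b : Bset lt, ((val b).2 == z) && (val (theta b) == (u, u'))]] +
    [&& lt u' u & [exists b : Bset lt, ((val b).1 == z) && (val (theta b) == (u', u))]] = w u' u.
  move: (adj i (ltn_ord i)); rewrite /adjacent /covers /=.
  by case/orP=> /andP [l _]; rewrite l (negbTE (lt_asym l)) /=;
    case: (wE _ _ l) => -> ->; rewrite ?addn0 ?add0n.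
rewrite (eq_bigr _ (fun i _ => (step i).1)) (eq_bigr _ (fun i _ => (step i).2)).
exact: sumE.
Qed.

Lemma exists_edge_preimage theta (F G : T * T -> T * T) (P : pred (T * T)) q :
  cancel F G -> cancel G F -> lt (G q).1 (G q).2 ->
  (forall b, val (theta b) = F (val b)) ->
  [exists b, P (val b) && (val (theta b) == q)] = P (G q).
Proof.
move=> FK GK ltGq thetaE; apply/existsP/idP => [[b /andP [Pb]]|PGq].
  by rewrite thetaE => /eqP <-; rewrite FK.
by exists (exist _ (G q) ltGq); rewrite PGq thetaE GK eqxx.
Qed.

Lemma proper_admissible theta : is_proper theta -> admissible theta.
Proof.
move=> thetaP u0 s [adj lastE] z.
case: thetaP => -[f [[[h fK hK] ltf] thetaE]].
- pose G (p : T * T) := (h p.1, h p.2).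
  have FK : cancel (fun p : T * T => (f p.1, f p.2)) G by case=> x y; rewrite /G /= !fK.
  have GK : cancel G (fun p => (f p.1, f p.2)) by case=> x y; rewrite /G /= !hK.
  apply: (walk_balance (w := fun x y => h x == z)) => // [x y lxy|].
    have ltG : lt (G (x, y)).1 (G (x, y)).2 by rewrite -ltf !hK.
    by split; [exact: (exists_edge_preimage (fun p => p.1 == z) FK GK ltG thetaE)
              | exact: (exists_edge_preimage (fun p => p.2 == z) FK GK ltG thetaE)].
  exact: closed_walk_sum_shift (fun u => h u == z) lastE.
- pose G (p : T * T) := (h p.2, h p.1).
  have FK : cancel (fun p : T * T => (f p.2, f p.1)) G by case=> x y; rewrite /G /= !fK.
  have GK : cancel G (fun p => (f p.2, f p.1)) by case=> x y; rewrite /G /= !hK.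
  apply: (walk_balance (w := fun x y => h y == z)) => // [x y lxy|].
    have ltG : lt (G (x, y)).1 (G (x, y)).2 by rewrite -ltf !hK.
    by split; [exact: (exists_edge_preimage (fun p => p.1 == z) FK GK ltG thetaE)
              | exact: (exists_edge_preimage (fun p => p.2 == z) FK GK ltG thetaE)].
  exact: esym (closed_walk_sum_shift (fun u => h u == z) lastE).
Qed.

End Poset.

Lemma Kmn_lt_asym m n (x y : Kmn_T m n) : Kmn_lt m n x y -> ~~ Kmn_lt m n y x.
Proof. by case: x; case: y. Qed.

Lemma Kmn_covers m n (i : 'I_m) (j : 'I_n) : covers (Kmn_lt m n) (inl i) (inr j).
Proof. by rewrite /covers /=; apply/existsP => -[[w|w]] /andP []. Qed.

Lemma Kmn_chain m n (t : seq (Kmn_T m n)) :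
  is_chain (Kmn_lt m n) t -> size t <= 1 \/ exists i j, t = [:: inl i; inr j].
Proof.
case: t => [|[i|j] [|[i'|j'] [|w t]]] //=; try by left.
by right; exists i, j'.
Qed.

Section CompleteBipartite.
Variables m n : nat.
Local Notation K := (Kmn_lt m.+1 n.+1).
Implicit Types (theta g : Bset K -> Bset K).

Definition edge (i : 'I_m.+1) (j : 'I_n.+1) : Bset K := exist _ (inl i, inr j) isT.
Definition src (b : Bset K) : 'I_m.+1 := if (val b).1 is inl i then i else ord0.
Definition dst (b : Bset K) : 'I_n.+1 := if (val b).2 is inr j then j else ord0.

Lemma val_src_dst b : val b = (inl (src b), inr (dst b)).
Proof. by case: b => [[[i|i] [j|j]] ?]. Qed.

Lemma edge_src_dst b : b = edge (src b) (dst b).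
Proof. exact/val_inj/val_src_dst. Qed.

Lemma Kmn_max_chainP C : max_chain K C <-> exists i j, C = [:: inl i; inr j].
Proof.
split=> [[chainC maxC]|[i [j ->]]].
  case: (Kmn_chain chainC) => // sizeC.
  have [i [j subC]] : exists i j, {subset C <= [:: inl i; inr j]}.
    case: C sizeC {chainC maxC} => [|[i|j] []] // _;
      [exists ord0, ord0 | exists i, ord0 | exists ord0, j];
      by move=> x; rewrite !inE // => /eqP ->; rewrite eqxx ?orbT.
  have := uniq_leq_size (isT : uniq [:: inl i; inr j]) (maxC [:: inl i; inr j] isT subC).
  by move=> /leq_trans/(_ sizeC).
split=> // t chain_t sub_t.
have size_t : size t <= 2 by case: (Kmn_chain chain_t) => [/leqW|[? [? ->]]].
have [_ eq_t] := uniq_min_size (isT : uniq [:: inl i; inr j]) sub_t size_t.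
by move=> x; rewrite eq_t.
Qed.

Lemma Kmn_increasing_on theta C : max_chain K C -> increasing_on theta C.
Proof.
case/Kmn_max_chainP=> i [j ->]; set e := theta (edge i j).
exists [:: inl (src e); inr (dst e)].
split; first by apply/Kmn_max_chainP; exists (src e), (dst e).
split=> // x0 [|[|?]] [|[|?]] //= _ _ b valb.
by rewrite (_ : b = edge i j) ?val_src_dst //; exact: val_inj.
Qed.

Lemma Kmn_inM theta : inM theta <-> bijective theta.
Proof.
split=> [[]//|bij_theta]; split=> // C maxC.
by left; exact: Kmn_increasing_on.
Qed.

Lemma exists_preimage_edge theta g (P : pred (Bset K)) a c :
  cancel theta g -> cancel g theta ->
  [exists b, P b && (val (theta b) == (inl a, inr c))] = P (g (edge a c)).
Proof. exact: (exists_preimage P (edge a c)). Qed.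

Lemma Kmn_admissible_square theta g : cancel theta g -> cancel g theta ->
  admissible theta -> forall a b c d,
  perm_eq [:: src (g (edge a c)); src (g (edge b d))] [:: src (g (edge b c)); src (g (edge a d))] /\
  perm_eq [:: dst (g (edge a c)); dst (g (edge b d))] [:: dst (g (edge b c)); dst (g (edge a d))].
Proof.
move=> thetaK gK adm a b c d.
have square : closed_walk K (inl a) [:: inr c; inl b; inr d; inl a].
  by split=> //=; rewrite /adjacent !Kmn_covers ?orbT.
have balance z :
    ((val (g (edge a c))).1 == z) + ((val (g (edge b d))).1 == z)
  + (((val (g (edge b c))).2 == z) + ((val (g (edge a d))).2 == z))
  = ((val (g (edge a c))).2 == z) + ((val (g (edge b d))).2 == z)
  + (((val (g (edge b c))).1 == z) + ((val (g (edge a d))).1 == z)).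
  move/eqz_sub_nat: (adm _ _ square z).
  rewrite /s_plus /s_minus /t_plus /t_minus !big_ord_recl !big_ord0 /=.
  by rewrite !(exists_preimage_edge _ _ _ thetaK gK) !add0n !addn0.
split; apply/allP => k _; apply/eqP; [move: (balance (inl k)) | move/esym: (balance (inr k))];
  by rewrite !val_src_dst /= ?(inj_eq inl_inj) ?(inj_eq inr_inj) !addn0 ?add0n.
Qed.

Lemma Kmn_proper_of_split g (P : 'I_m.+1 -> 'I_m.+1) (Q : 'I_n.+1 -> 'I_n.+1) :
  injective g -> (forall i j, g (edge i j) = edge (P i) (Q j)) -> is_proper g.
Proof.
move=> g_inj gE.
have P_inj : injective P.
  move=> i i' Pii'; have /g_inj/(congr1 src) // : g (edge i ord0) = g (edge i' ord0).
  by rewrite !gE Pii'.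
have Q_inj : injective Q.
  move=> j j' Qjj'; have /g_inj/(congr1 dst) // : g (edge ord0 j) = g (edge ord0 j').
  by rewrite !gE Qjj'.
pose f x := match x with inl i => inl (P i) | inr j => inr (Q j) end : Kmn_T m.+1 n.+1.
left; exists f; split.
  split; last by case=> x [] y.
  by apply: injF_bij => -[i|j] [i'|j'] //= [] => [/P_inj|/Q_inj] ->.
by move=> b; rewrite (edge_src_dst b) gE.
Qed.

Lemma Kmn_proper_of_swap g (P : 'I_n.+1 -> 'I_m.+1) (Q : 'I_m.+1 -> 'I_n.+1) :
  injective g -> (forall i j, g (edge i j) = edge (P j) (Q i)) -> is_proper g.
Proof.
move=> g_inj gE.
have P_inj : injective P.
  move=> j j' Pjj'; have /g_inj/(congr1 dst) // : g (edge ord0 j) = g (edge ord0 j').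
  by rewrite !gE Pjj'.
have Q_inj : injective Q.
  move=> i i' Qii'; have /g_inj/(congr1 src) // : g (edge i ord0) = g (edge i' ord0).
  by rewrite !gE Qii'.
pose f x := match x with inl i => inr (Q i) | inr j => inl (P j) end : Kmn_T m.+1 n.+1.
right; exists f; split.
  split; last by case=> x [] y.
  by apply: injF_bij => -[i|j] [i'|j'] //= [] => [/Q_inj|/P_inj] ->.
by move=> b; rewrite (edge_src_dst b) gE.
Qed.

Hypotheses (m_gt0 : 0 < m) (n_gt0 : 0 < n).

Lemma Kmn_admissible_proper theta : bijective theta -> admissible theta -> is_proper theta.
Proof.
case=> g thetaK gK adm; apply: (proper_inv thetaK gK).
have g_inj := can_inj gK.
pose p i j := src (g (edge i j)); pose q i j := dst (g (edge i j)).
have gE i j : g (edge i j) = edge (p i j) (q i j) by exact: edge_src_dst.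
have square := Kmn_admissible_square thetaK gK adm.
have [p_row|p_col] := constant_rows_or_columns (F := p) (fun a b c d => (square a b c d).1);
  have [q_row|q_col] := constant_rows_or_columns (F := q) (fun a b c d => (square a b c d).2).
- have /g_inj/(congr1 dst)/(congr1 val) /= n0 : g (edge ord0 ord0) = g (edge ord0 ord_max).
    by rewrite !gE (p_row _ _ ord_max) (q_row _ _ ord_max).
  by move: n_gt0; rewrite -[n in 0 < n]n0.
- apply: (Kmn_proper_of_split (P := p^~ ord0) (Q := q ord0) g_inj) => i j.
  by rewrite gE (p_row i j ord0) (q_col i ord0 j).
- apply: (Kmn_proper_of_swap (P := p ord0) (Q := q^~ ord0) g_inj) => i j.
  by rewrite gE (p_col i ord0 j) (q_row i j ord0).
- have /g_inj/(congr1 src)/(congr1 val) /= m0 : g (edge ord0 ord0) = g (edge ord_max ord0).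
    by rewrite !gE (p_col _ ord_max) (q_col _ ord_max).
  by move: m_gt0; rewrite -[m in 0 < m]m0.
Qed.

End CompleteBipartite.

Theorem proposition4p14 (m n : nat) :
  2 <= m -> m <= n ->
  forall theta : Bset (Kmn_lt m n) -> Bset (Kmn_lt m n),
    is_proper theta <-> inAM theta.
Proof.
case: m => [|[|m]] // _; case: n => [|[|n]] // _ theta.
rewrite /inAM Kmn_inM; split=> [thetaP | [bij_theta adm]].
  split; first exact: proper_bijective.
  exact: proper_admissible (@Kmn_lt_asym _ _) _ thetaP.
exact: Kmn_admissible_proper.
Qed.
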